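(* Let $0<\alpha_1\le\dots\le\alpha_r$ and $\Lambda=\Lambda(\alpha_1,\dots,\alpha_r)$. Then: (1) $w(\Lambda)=\alpha_r$; (2) $\Lambda$ equals the downwards closure of the convex hull of all coordinate permutations of the vector $(\alpha_1,\dots,\alpha_r)$; (3) for every $j\in[r]$, the slice $\{\mathbf x_{-j}:\mathbf x\in\Lambda,\ x_j=\alpha_r\}$ equals $\Lambda(\alpha_1,\dots,\alpha_{r-1})$; (4) for every $j\in[r]$, the projection $\Lambda_{[r]\setminus\{j\}}=\{\mathbf x_{-j}:\mathbf x\in\Lambda\}$ equals $\Lambda(\alpha_2,\dots,\alpha_r)$; (5) $\delta_{qk}(q\cdot\Lambda)=q^r\delta_k(\Lambda)$ for all $q,k>0$.
   Context: SIM-body: $\Lambda(\alpha_1,\dots,\alpha_r)=\{\mathbf x\in\mathbb R_+^r:\sum_{j\in J}x_j\le\sum_{j=r-|J|+1}^r\alpha_j\ \forall J\subseteq[r]\}$ (with $\Lambda()$ of the empty sequence being the single point of $\mathbb R^0$), and $q\cdot\Lambda(\alpha_1,\dots,\alpha_r)=\Lambda(q\alpha_1,\dots,q\alpha_r)$. The downwards closure of $S\subseteq\mathbb R_+^r$ is $\{\mathbf x\in\mathbb R_+^r:\exists\mathbf y\in S,\ \mathbf x\le\mathbf y\}$. The width of a symmetric body is the length of its projection onto any coordinate axis. For $k>0$ and an $r$-dimensional body $A$, $\delta_k(A)=|A|-k\sum_{j=1}^r|A_{[r]\setminus\{j\}}|$ with $|\cdot|$ Lebesgue measure of the relevant dimension.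 *)

From HB Require Import structures.
From mathcomp Require Import all_boot all_order all_algebra all_fingroup.
From mathcomp Require Import all_classical all_reals all_analysis.
Set Implicit Arguments. Unset Strict Implicit. Unset Printing Implicit Defensive.
Import Order.TTheory GRing.Theory Num.Theory.
Local Open Scope classical_set_scope.
Local Open Scope ring_scope.

Section SIMDefs.
Variable R : realType.

(* Points of R^r are functions 'I_r -> R (coordinates indexed 0..r-1). *)

(* SIM-body Lambda(a_1,...,a_r): x >= 0 and for every J, sum_{j in J} x_j is
   at most the sum of the |J| largest-indexed a's, i.e. a_{r-|J|+1}+...+a_r
   (0-indexed: indices i with r - |J| <= i). *)
Definition SIM (r : nat) (a : 'I_r -> R) : set ('I_r -> R) :=
  [set x | (forall i, 0 <= x i) /\
           forall J : {set 'I_r},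
             \sum_(j in J) x j <= \sum_(i < r | (r - #|J| <= i)%N) a i].

Definition scale_set (r : nat) (q : R) (A : set ('I_r -> R)) : set ('I_r -> R) :=
  [set (fun i => q * x i) | x in A].

Definition drop_coord (n : nat) (j : 'I_n.+1) (x : 'I_n.+1 -> R) : 'I_n -> R :=
  fun i => x (lift j i).

Definition proj_out (n : nat) (j : 'I_n.+1) (A : set ('I_n.+1 -> R)) :
  set ('I_n -> R) := [set drop_coord j x | x in A].

Definition conv_hull (r : nat) (S : set ('I_r -> R)) : set ('I_r -> R) :=
  [set x | exists (m : nat) (w : 'I_m -> R) (p : 'I_m -> 'I_r -> R),
     [/\ (forall k, 0 <= w k), \sum_(k < m) w k = 1, (forall k, S (p k)) &
         forall i, x i = \sum_(k < m) w k * p k i]].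

Definition down_closure (r : nat) (S : set ('I_r -> R)) : set ('I_r -> R) :=
  [set x | (forall i, 0 <= x i) /\ exists2 y, S y & forall i, x i <= y i].

Definition width_along (r : nat) (j : 'I_r) (A : set ('I_r -> R)) : \bar R :=
  (@lebesgue_measure R) [set x j | x in A].

Definition cons_coord (n : nat) (t : R) (y : 'I_n -> R) : 'I_n.+1 -> R :=
  fun i => match unlift ord0 i with None => t | Some k => y k end.

(* r-dimensional Lebesgue volume, computed by iterated Lebesgue integrals
   (Cavalieri / Fubini-Tonelli); in dimension 0 it is the counting measure
   on the one-point space R^0. *)
Fixpoint volume (r : nat) : set ('I_r -> R) -> \bar R :=
  match r return set ('I_r -> R) -> \bar R with
  | 0 => fun A => if `[< A !=set0 >] then 1%E else 0%E
  | n.+1 => fun A =>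
      (\int[@lebesgue_measure R]_(t in [set: R])
          volume (fun y : 'I_n -> R => A (cons_coord t y)))%E
  end.

Definition delta (n : nat) (k : R) (A : set ('I_n.+1 -> R)) : \bar R :=
  (volume A - k%:E * \sum_(j < n.+1) volume (proj_out j A))%E.

End SIMDefs.

From HB Require Import structures.
From mathcomp Require Import all_boot all_order all_algebra all_fingroup.
From mathcomp Require Import all_classical all_reals all_analysis.
From mathcomp Require Import zify ring lra measurable_realfun.
Set Implicit Arguments. Unset Strict Implicit. Unset Printing Implicit Defensive.
Import Order.TTheory GRing.Theory Num.Theory.
Local Open Scope classical_set_scope.
Local Open Scope ring_scope.

(* Inserting or deleting one
   coordinate gives (1), (3) and (4).  For (2), the nontrivial inclusion is by
   induction on r: if m = x_j is the largest coordinate of x, alpha_M the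
   largest alpha and alpha_k the largest alpha <= m (k <> M), write
   m = l alpha_M + (1 - l) alpha_k; the vector x_{-j} is again dominated by
   alpha with alpha_M deleted and alpha_k raised by alpha_M - m, and averaging
   the two ways of sending j to M or to k turns the convex combination given
   by induction into one for x.  For (5), the recursive volume is homogeneous
   of degree r because the Lebesgue integral of a nonnegative function
   dilates linearly, and projections commute with dilations. *)

Section TopSums.
Variable R : realType.

Definition topsum r (a : 'I_r -> R) (s : nat) : R :=
  \sum_(i < r | (r - s <= i)%N) a i.

Lemma SIMP r (a x : 'I_r -> R) :
  SIM a x <-> (forall i, 0 <= x i) /\
              forall J : {set 'I_r}, \sum_(j in J) x j <= topsum a #|J|.
Proof. by []. Qed.

Lemma card_top_ord r s : (s <= r)%N -> #|[set i : 'I_r | (r - s <= i)%N]%SET| = s.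
Proof.
move=> sr; rewrite -sum1_card.
rewrite (eq_bigl (fun i : 'I_r => xpredT i && (r - s <= i)%N)); last by move=> i; rewrite inE.
rewrite -(@big_geq_mkord _ 0%N addn (r - s) r xpredT (fun _ => 1%N)) sum_nat_const_nat muln1; lia.
Qed.

Lemma topsumE r (a : 'I_r -> R) s :
  topsum a s = \sum_(i in [set i : 'I_r | (r - s <= i)%N]%SET) a i.
Proof. by apply: eq_bigl => i; rewrite inE. Qed.

Lemma ler_sum_card r (f : 'I_r -> R) (A B : {set 'I_r}) :
  #|A| = #|B| -> (forall i t, i \in A -> t \in B -> f i <= f t) ->
  \sum_(i in A) f i <= \sum_(i in B) f i.
Proof.
move=> cAB fAB; have [A0|Apos] := posnP #|A|.
  move: (A0); rewrite cAB => /eqP; rewrite cards_eq0 => /eqP ->.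
  by move/eqP: A0; rewrite cards_eq0 => /eqP ->; rewrite !big_set0.
rewrite -(ler_pM2l (_ : 0 < #|A|%:R)) ?ltr0n //.
have -> : #|A|%:R * \sum_(i in A) f i = \sum_(i in A) \sum_(t in B) f i.
  by rewrite mulr_sumr; apply: eq_bigr => i _; rewrite sumr_const cAB mulr_natl.
have -> : #|A|%:R * \sum_(t in B) f t = \sum_(i in A) \sum_(t in B) f t.
  by rewrite sumr_const mulr_natl.
by apply: ler_sum => i iA; apply: ler_sum => t tB; exact: fAB.
Qed.

Definition dominated r (a x : 'I_r -> R) :=
  forall J : {set 'I_r}, exists2 S : {set 'I_r},
    #|S| = #|J| & \sum_(j in J) x j <= \sum_(i in S) a i.

Section Monotone.
Variables (r : nat) (a : 'I_r -> R).
Hypothesis a_mono : forall i j : 'I_r, (i <= j)%N -> a i <= a j.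

(* Exchanging the elements of [S] outside the top indices for the top indices
   outside [S] can only increase the sum. *)
Lemma sum_le_topsum (S : {set 'I_r}) : \sum_(i in S) a i <= topsum a #|S|.
Proof.
set T := [set i : 'I_r | (r - #|S| <= i)%N]%SET.
have cT : #|T| = #|S| by rewrite card_top_ord // (leq_trans (max_card _)) ?card_ord.
rewrite topsumE (big_setID T) [X in _ <= X](big_setID S) /= finset.setIC lerD2l.
apply: ler_sum_card; first by rewrite !cardsD cT finset.setIC.
move=> i t; rewrite !inE -ltnNge => /andP[iT _] /andP[_ tT].
exact/a_mono/ltnW/(leq_trans iT tT).
Qed.

Lemma SIM_dominated (x : 'I_r -> R) :
  SIM a x <-> (forall i, 0 <= x i) /\ dominated a x.
Proof.
split=> -[x0 xJ]; split=> // J.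
  exists [set i : 'I_r | (r - #|J| <= i)%N]%SET.
    by rewrite card_top_ord // (leq_trans (max_card _)) ?card_ord.
  by rewrite -topsumE.
by have [S <- /le_trans->] := xJ J; rewrite ?sum_le_topsum.
Qed.

End Monotone.

Lemma topsum_le r (a : 'I_r -> R) s s' : (forall i, 0 <= a i) -> (s' <= s)%N ->
  topsum a s' <= topsum a s.
Proof.
move=> a0 ss; rewrite /topsum [X in X <= _]big_mkcond [X in _ <= X]big_mkcond.
apply: ler_sum => i _; case: ifP => h1; case: ifP => h2 //.
by move: h2; rewrite (leq_trans _ h1) // leq_sub2l.
Qed.

Lemma topsum_lift0 n (a : 'I_n.+1 -> R) s : (s <= n)%N ->
  topsum a s = topsum (fun i : 'I_n => a (lift ord0 i)) s.
Proof.
move=> sn; rewrite /topsum big_mkcond big_ord_recl /= [in RHS]big_mkcond.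
have -> : (n.+1 - s <= 0)%N = false by apply/negbTE; rewrite -ltnNge subn_gt0 ltnS.
by rewrite add0r; apply: eq_bigr => i _; rewrite /bump /= add1n subSn.
Qed.

Lemma topsumS_widen n (a : 'I_n.+1 -> R) s : (s <= n)%N ->
  topsum a s.+1 = topsum (fun i : 'I_n => a (widen_ord (leqnSn n) i)) s + a ord_max.
Proof.
by move=> sn; rewrite /topsum big_mkcond big_ord_recr /= [in RHS]big_mkcond subSS leq_subr.
Qed.

Lemma topsum1 n (a : 'I_n.+1 -> R) : topsum a 1 = a ord_max.
Proof.
rewrite -[1%N]/(0.+1) topsumS_widen // /topsum big_pred0 ?add0r //.
by move=> i; rewrite subn0 leqNgt ltn_ord.
Qed.

Lemma topsum_widen_le n (a : 'I_n.+1 -> R) s :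
  (forall i j : 'I_n.+1, (i <= j)%N -> a i <= a j) -> (s <= n)%N ->
  topsum (fun i : 'I_n => a (widen_ord (leqnSn n) i)) s <= topsum a s.
Proof.
move=> a_mono sn; set S := [set i : 'I_n | (n - s <= i)%N]%SET.
have winj : injective (widen_ord (leqnSn n)) by move=> i1 i2 /(congr1 val) /= /val_inj.
rewrite (_ : topsum _ s = \sum_(t in widen_ord (leqnSn n) @: S) a t); last first.
  by rewrite big_imset /=; [apply: eq_bigl => i; rewrite inE | move=> ? ? _ _ /winj].
by rewrite -{1}(card_top_ord sn) -(card_imset _ winj) sum_le_topsum.
Qed.

End TopSums.

Lemma setD1_id (T : finType) (A : {set T}) x : x \notin A -> A :\ x = A.
Proof. by move=> xA; apply/setP => t; rewrite in_setD1; case: eqVneq => // ->; rewrite (negbTE xA). Qed.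

Lemma imset_lift_preimset n (M : 'I_n.+1) (U : {set 'I_n.+1}) :
  lift M @: (lift M @^-1: U) = U :\ M.
Proof.
apply/setP => t; rewrite in_setD1; case: (unliftP M t) => [t'|] ->.
  by rewrite eq_sym neq_lift mem_imset ?inE //; exact: lift_inj.
by rewrite eqxx; apply/negbTE/negP => /imsetP[i _ /eqP]; rewrite (negbTE (neq_lift _ _)).
Qed.

Lemma card_preimset_lift n (M : 'I_n.+1) (U : {set 'I_n.+1}) :
  #|lift M @^-1: U| = #|U :\ M|.
Proof. by rewrite -imset_lift_preimset card_imset //; exact: lift_inj. Qed.

Lemma sum_preimset_lift (V : nmodType) n (M : 'I_n.+1) (U : {set 'I_n.+1})
    (F : 'I_n.+1 -> V) :
  \sum_(i in lift M @^-1: U) F (lift M i) = \sum_(t in U :\ M) F t.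
Proof. by rewrite -imset_lift_preimset big_imset //= => i1 i2 _ _; exact: lift_inj. Qed.

Section InsertCoord.
Variable R : realType.

Definition insert_coord n (j : 'I_n.+1) (v : R) (y : 'I_n -> R) : 'I_n.+1 -> R :=
  fun i => if unlift j i is Some i' then y i' else v.

Lemma drop_insert_coord n (j : 'I_n.+1) v y : drop_coord j (insert_coord j v y) = y.
Proof. by apply/funext => i; rewrite /drop_coord /insert_coord liftK. Qed.

Lemma insert_coord_at n (j : 'I_n.+1) v y : insert_coord j v y j = v.
Proof. by rewrite /insert_coord unlift_none. Qed.

Lemma insert_coord_ge0 n (j : 'I_n.+1) v y :
  0 <= v -> (forall i, 0 <= y i) -> forall i, 0 <= insert_coord j v y i.
Proof. by move=> v0 y0 i; rewrite /insert_coord; case: unlift. Qed.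

Lemma card_lift_preimset n (j : 'I_n.+1) (J : {set 'I_n.+1}) :
  #|J| = ((j \in J) + #|lift j @^-1: J|)%N.
Proof. by rewrite card_preimset_lift (cardsD1 j J). Qed.

Lemma sum_insert_coord n (j : 'I_n.+1) v y (J : {set 'I_n.+1}) :
  \sum_(i in J) insert_coord j v y i =
    (if j \in J then v else 0) + \sum_(i in lift j @^-1: J) y i.
Proof.
rewrite (eq_bigr (fun i => insert_coord j v y (lift j i))); last first.
  by move=> i _; rewrite /insert_coord liftK.
rewrite sum_preimset_lift; case: ifP => jJ; first by rewrite (big_setD1 j) ?insert_coord_at.
by rewrite add0r setD1_id ?jJ.
Qed.

Lemma sum_drop_coord n (j : 'I_n.+1) (x : 'I_n.+1 -> R) (J : {set 'I_n}) :
  \sum_(i in J) drop_coord j x i = \sum_(t in lift j @: J) x t.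
Proof. by rewrite big_imset //= => i1 i2 _ _; exact: lift_inj. Qed.

Lemma card_imset_lift n (j : 'I_n.+1) (J : {set 'I_n}) : #|lift j @: J| = #|J|.
Proof. by rewrite card_imset //; exact: lift_inj. Qed.

Lemma notin_imset_lift n (j : 'I_n.+1) (J : {set 'I_n}) : j \notin lift j @: J.
Proof. by apply/negP => /imsetP[i _ /eqP]; rewrite (negbTE (neq_lift _ _)). Qed.

End InsertCoord.

Section SIMSlices.
Variables (R : realType) (n : nat) (a : 'I_n.+1 -> R).
Hypothesis a_ge0 : forall i, 0 <= a i.

Let card_le_n (J : {set 'I_n}) : (#|J| <= n)%N.
Proof. by rewrite (leq_trans (max_card _)) ?card_ord. Qed.

Lemma proj_out_SIM (j : 'I_n.+1) :
  proj_out j (SIM a) = SIM (fun i : 'I_n => a (lift ord0 i)).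
Proof.
apply/seteqP; split => y.
  move=> [x /SIMP[x0 xJ] <-]; apply/SIMP; split=> [i|J]; first exact: x0.
  by rewrite sum_drop_coord (le_trans (xJ _)) // card_imset_lift topsum_lift0.
move=> /SIMP[y0 yJ]; exists (insert_coord j 0 y); last exact: drop_insert_coord.
apply/SIMP; split=> [|J]; first exact: insert_coord_ge0.
rewrite sum_insert_coord if_same add0r (le_trans (yJ _)) // -topsum_lift0 //.
by rewrite topsum_le // [in X in (_ <= X)%N](card_lift_preimset j) leq_addl.
Qed.

Lemma width_SIM (j : 'I_n.+1) : width_along j (SIM a) = (a ord_max)%:E.
Proof.
rewrite /width_along; suff -> : [set x j | x in SIM a] = `[0, a ord_max]%classic.
  rewrite lebesgue_measure_itv /= lte_fin -EFinB subr0.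
  by case: ltgtP (a_ge0 ord_max) => // <-.
apply/seteqP; split=> [_ [x /SIMP[x0 xJ] <-]|y].
  by rewrite /= in_itv /= x0 /= -topsum1 -(cards1 j) (le_trans _ (xJ [set j]%SET)) ?big_set1.
rewrite /= in_itv /= => /andP[y0 yM].
exists (insert_coord j y (fun _ => 0)); last exact: insert_coord_at.
apply/SIMP; split=> [|J]; first exact: insert_coord_ge0.
rewrite sum_insert_coord big1 // addr0; case: ifP => jJ; last exact: sumr_ge0.
rewrite (le_trans yM) // -topsum1 topsum_le // card_gt0; apply/set0Pn; by exists j.
Qed.

Hypothesis a_mono : forall i j : 'I_n.+1, (i <= j)%N -> a i <= a j.

Lemma slice_SIM_max (j : 'I_n.+1) :
  [set drop_coord j x | x in [set x | SIM a x /\ x j = a ord_max]]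
  = SIM (fun i : 'I_n => a (widen_ord (leqnSn n) i)).
Proof.
apply/seteqP; split => y.
  move=> [x [/SIMP[x0 xJ] xj] <-]; apply/SIMP; split=> [i|J]; first exact: x0.
  have := xJ (j |: lift j @: J).
  rewrite big_setU1 ?notin_imset_lift //= cardsU1 notin_imset_lift card_imset_lift.
  by rewrite xj topsumS_widen // sum_drop_coord; lra.
move=> /SIMP[y0 yJ]; exists (insert_coord j (a ord_max) y); last exact: drop_insert_coord.
split; last exact: insert_coord_at.
apply/SIMP; split=> [|J]; first exact: insert_coord_ge0.
rewrite sum_insert_coord (card_lift_preimset j); have := yJ (lift j @^-1: J).
case: (j \in J) => /= h; first by rewrite add1n topsumS_widen //; lra.
by rewrite add0r add0n (le_trans h) // topsum_widen_le.
Qed.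

End SIMSlices.

Section Exchange.
Variable R : realType.

Definition add_at r (a : 'I_r -> R) (k : 'I_r) (e : R) : 'I_r -> R :=
  fun t => if t == k then a k + e else a t.

Lemma add_at_ge r (a : 'I_r -> R) k e : 0 <= e -> forall t, a t <= add_at a k e t.
Proof. by move=> e0 t; rewrite /add_at; case: eqP => // ->; lra. Qed.

Lemma sum_add_at r (a : 'I_r -> R) k e (U : {set 'I_r}) : k \in U ->
  \sum_(t in U) add_at a k e t = e + \sum_(t in U) a t.
Proof.
move=> kU; rewrite (big_setD1 k kU) [in RHS](big_setD1 k kU) /= /add_at eqxx.
rewrite -addrA addrCA; congr (_ + (_ + _)).
by apply: eq_bigr => t; rewrite in_setD1 => /andP[/negbTE->].
Qed.

Lemma card_mul_le_sum r (b : 'I_r -> R) m (U : {set 'I_r}) :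
  (forall t, t \in U -> m <= b t) -> #|U|%:R * m <= \sum_(t in U) b t.
Proof. by move=> h; rewrite mulr_natl -sumr_const; exact: ler_sum. Qed.

Variables (n : nat) (a : 'I_n.+1 -> R) (m : R) (M k : 'I_n.+1).
Hypotheses (mM : m <= a M) (kM : k != M)
  (k_max : forall t, t != M -> a t <= m -> a t <= a k).

Let b := add_at a k (a M - m).

Let a_le_b t : a t <= b t.
Proof. by apply: add_at_ge; rewrite subr_ge0. Qed.

Let above_m_sum (U : {set 'I_n.+1}) :
  (forall t, t \in U -> ~ a t <= m) -> #|U|%:R * m <= \sum_(t in U) b t.
Proof.
move=> h; apply: card_mul_le_sum => t /h atm; apply: le_trans (a_le_b t).
by rewrite leNgt; apply/negP => /ltW.
Qed.

(* Removing [M] from a set [T] costs at most [m] once [a M - m] is moved onto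
   [k], unless every remaining [a t] already exceeds [m]. *)
Lemma exchange_max (T : {set 'I_n.+1}) s : #|T| = s.+1 ->
  exists U : {set 'I_n.+1}, [/\ M \notin U, #|U| = s &
    \sum_(t in T) a t - m <= \sum_(t in U) b t \/ s%:R * m <= \sum_(t in U) b t].
Proof.
move=> cT; have [MT|MT] := boolP (M \in T).
  have cT' : #|T :\ M| = s by move: cT; rewrite (cardsD1 M) MT => -[].
  have sT : \sum_(t in T) a t = a M + \sum_(t in T :\ M) a t by rewrite (big_setD1 M).
  have [kT|kT] := boolP (k \in T :\ M).
    exists (T :\ M); split; rewrite ?setD11 //; left.
    by rewrite sum_add_at // sT; lra.
  have [[t tT atm]|] := pselect (exists2 t, t \in T :\ M & a t <= m).
    have tM : t != M by move: tT; rewrite in_setD1 => /andP[].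
    have kTt : k \notin T :\ M :\ t by rewrite in_setD1 negb_and kT orbT.
    exists (k |: (T :\ M :\ t)); split.
    - by rewrite !inE negb_or eq_sym kM eqxx !andbF.
    - by rewrite cardsU1 kTt -cT' (cardsD1 t (T :\ M)) tT.
    - left; rewrite sum_add_at ?setU11 // big_setU1 //= sT (big_setD1 t) //=.
      by have := k_max tM atm; lra.
  move=> /forall2NP h; exists (T :\ M); split; rewrite ?setD11 //; right.
  by rewrite -cT'; apply: above_m_sum => t tT; have [/(_ tT)|] := h t.
have [[t tT atm]|/forall2NP h] := pselect (exists2 t, t \in T & a t <= m).
  exists (T :\ t); split.
  - by rewrite in_setD1 (negbTE MT) andbF.
  - by move: cT; rewrite (cardsD1 t) tT => -[].
  - left; rewrite (big_setD1 t) //= (le_trans _ (ler_sum _ (fun t _ => a_le_b t))) //.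
    lra.
have : (0 < #|T|)%N by rewrite cT.
rewrite card_gt0 => /set0Pn[t0 t0T]; exists (T :\ t0); split.
- by rewrite in_setD1 (negbTE MT) andbF.
- by move: cT; rewrite (cardsD1 t0) t0T => -[].
- right; have -> : s = #|T :\ t0| by move: cT; rewrite (cardsD1 t0) t0T => -[].
  apply: above_m_sum => t; rewrite in_setD1 => /andP[_ tT].
  by have [/(_ tT)|] := h t.
Qed.

End Exchange.

Section Drop.
Variables (R : realType) (n : nat) (a x : 'I_n.+1 -> R) (j M k : 'I_n.+1).
Hypotheses (x_dom : dominated a x) (x_max : forall i, x i <= x j).
Hypotheses (mM : x j <= a M) (kM : k != M)
  (k_max : forall t, t != M -> a t <= x j -> a t <= a k).

Lemma dominated_drop_coord :
  dominated (fun i => add_at a k (a M - x j) (lift M i)) (drop_coord j x).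
Proof.
move=> J; have [T cT hT] := x_dom (j |: lift j @: J).
rewrite cardsU1 notin_imset_lift card_imset_lift /= add1n in cT.
rewrite big_setU1 ?notin_imset_lift //= in hT.
have [U [MU cU hU]] := exchange_max mM kM k_max cT.
exists (lift M @^-1: U); first by rewrite card_preimset_lift setD1_id.
rewrite sum_preimset_lift setD1_id // sum_drop_coord.
have : \sum_(t in lift j @: J) x t <= #|J|%:R * x j.
  by rewrite -(card_imset_lift j) mulr_natl -sumr_const; exact: ler_sum.
by case: hU => hU; lra.
Qed.

End Drop.

Section PermHull.
Variable R : realType.

Definition perm_hull r (a : 'I_r -> R) : set ('I_r -> R) :=
  conv_hull [set (fun i => a (s i)) | s in [set: 'S_r]].

Lemma conv_hull_fin r (S : set ('I_r -> R)) (I : finType) (w : I -> R)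
    (p : I -> 'I_r -> R) (x : 'I_r -> R) :
  (forall k, 0 <= w k) -> \sum_k w k = 1 -> (forall k, S (p k)) ->
  (forall i, x i = \sum_k w k * p k i) -> conv_hull S x.
Proof.
move=> w0 w1 Sp xE.
exists #|I|, (fun k => w (enum_val k)), (fun k => p (enum_val k)); split=> //.
- by rewrite -(big_enum_val (A := I)).
- by move=> i; rewrite xE (big_enum_val (A := I)).
Qed.

Lemma conv_hull_point r (S : set ('I_r -> R)) p : S p -> conv_hull S p.
Proof.
move=> Sp; apply: (@conv_hull_fin _ _ 'I_1 (fun _ => 1) (fun _ => p)) => //.
- by rewrite big_ord1.
- by move=> i; rewrite big_ord1 mul1r.
Qed.

Lemma insert_coord_sum n (j : 'I_n.+1) v (I : finType) (w : I -> R)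
    (p : I -> 'I_n -> R) : \sum_k w k = 1 ->
  insert_coord j v (fun i => \sum_k w k * p k i) =
  (fun i => \sum_k w k * insert_coord j v (p k) i).
Proof.
move=> w1; apply/funext => i; rewrite /insert_coord.
by case: unlift => //; rewrite -mulr_suml w1 mul1r.
Qed.

(* A point of [perm_hull a] with coordinate [j] equal to [l a_M + (1-l) a_k]:
   average the permutation sending [j] to [M] with its composite with the
   transposition of [k] and [M]. *)
Lemma insert_coord_lift_perm n (a : 'I_n.+1 -> R) (j M k : 'I_n.+1) l (s : 'S_n) :
  let m := l * a M + (1 - l) * a k in
  insert_coord j m (fun i => add_at a k (a M - m) (lift M (s i))) =
  (fun i => l * a (lift_perm j M s i) + (1 - l) * a ((lift_perm j M s * tperm k M)%g i)).
Proof.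
move=> m; apply/funext => i; rewrite /insert_coord permM.
case: (unliftP j i) => [i'|] ->; last by rewrite lift_perm_id tpermR.
rewrite lift_perm_lift /add_at; case: eqP => [->|/eqP ne].
  by rewrite tpermL /m; ring.
by rewrite tpermD ?neq_lift 1?eq_sym //; ring.
Qed.

Lemma perm_hull_insert n (a : 'I_n.+1 -> R) (j M k : 'I_n.+1) l (y : 'I_n -> R) :
  0 <= l <= 1 ->
  let m := l * a M + (1 - l) * a k in
  perm_hull (fun i => add_at a k (a M - m) (lift M i)) y ->
  perm_hull a (insert_coord j m y).
Proof.
move=> /andP[l0 l1] m [mm [w [p [w0 w1 pS pE]]]].
have /choice[sig sigE] : forall q, exists s : 'S_n,
    p q = (fun i => add_at a k (a M - m) (lift M (s i))).
  by move=> q; have [s _ <-] := pS q; exists s.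
have -> : y = fun i => \sum_q w q * p q i by apply/funext.
rewrite insert_coord_sum //.
pose W (u : 'I_mm * bool) := w u.1 * (if u.2 then l else 1 - l).
pose s (u : 'I_mm * bool) :=
  if u.2 then lift_perm j M (sig u.1) else (lift_perm j M (sig u.1) * tperm k M)%g.
apply: (@conv_hull_fin _ _ _ W (fun u i => a (s u i))).
- by case=> q [] /=; rewrite /W; apply: mulr_ge0 => //; lra.
- rewrite -(pair_bigA _ (fun q b => W (q, b))) -w1.
  by apply: eq_bigr => q _; rewrite big_bool /W /=; ring.
- by move=> u; exists (s u).
move=> i; rewrite -(pair_bigA _ (fun q b => W (q, b) * a (s (q, b) i))).
apply: eq_bigr => q _; rewrite sigE insert_coord_lift_perm big_bool /W /s /=; ring.
Qed.

End PermHull.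

Section Majorization.
Variable R : realType.

Lemma convex_param (u v m : R) : u <= m -> m <= v ->
  exists2 l, 0 <= l <= 1 & m = l * v + (1 - l) * u.
Proof.
move=> um mv; have [uv|uv] := eqVneq u v.
  by exists 1; rewrite ?ler01 ?lexx //; move: um; rewrite uv; lra.
have vu : 0 < v - u by rewrite subr_gt0 lt_neqAle uv (le_trans um mv).
exists ((m - u) / (v - u)).
  by rewrite divr_ge0 ?ler_pdivrMr ?mul1r /=; lra.
by field; rewrite subr_eq0 eq_sym.
Qed.

Lemma dominated_le_perm_hull n (a x : 'I_n -> R) : dominated a x ->
  exists2 y, perm_hull a y & forall i, x i <= y i.
Proof.
elim: n a x => [|n IH] a x x_dom.
  by exists a; [apply: conv_hull_point; exists 1%g => //; apply/funext => -[] | case].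
have [j _ x_max] := @arg_maxP _ _ _ ord0 xpredT x isT.
have [M _ a_max] := @arg_maxP _ _ _ ord0 xpredT a isT.
have mM : x j <= a M.
  have [S /eqP] := x_dom [set j]%SET; rewrite cards1 => /cards1P[s ->].
  by rewrite !big_set1 => /le_trans; apply; exact: a_max.
have [[k0 k0M ak0]|] := pselect (exists2 k, k != M & a k <= x j); last first.
  move=> /forall2NP small; exists a.
    by apply: conv_hull_point; exists 1%g => //; apply/funext => i; rewrite perm1.
  move=> i; apply: le_trans (x_max i isT) _; have [->|iM] := eqVneq i M => //.
  by have [/(_ iM)|/negP] := small i; rewrite -?real_ltNge ?num_real // => /ltW.
pose P k := (k != M) && (a k <= x j).
have [k /andP[kM akm] k_max] := @arg_maxP _ _ _ k0 P a (introT andP (conj k0M ak0)).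
have [l l01 mE] := convex_param akm mM.
have := dominated_drop_coord x_dom (fun i => x_max i isT) mM kM
  (fun t tM atm => k_max t (introT andP (conj tM atm))).
move=> /IH[y' y'_hull xy']; exists (insert_coord j (x j) y').
  by rewrite mE; apply: perm_hull_insert; rewrite -?mE.
move=> i; case: (unliftP j i) => [i'|] ->; last by rewrite insert_coord_at.
by rewrite /insert_coord liftK; apply: xy'.
Qed.

Lemma SIM_perm_hull n (a : 'I_n -> R) :
  (forall i j : 'I_n, (i <= j)%N -> a i <= a j) ->
  SIM a = down_closure (perm_hull a).
Proof.
move=> a_mono; apply/seteqP; split=> x.
  by move=> /(SIM_dominated a_mono)[x0 /dominated_le_perm_hull[y]]; split=> //; exists y.
move=> [x0 [y [mm [w [p [w0 w1 pS pE]]]] xy]]; apply/SIMP; split=> // J.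
apply: (le_trans (ler_sum _ (fun i _ => xy i))).
rewrite (eq_bigr _ (fun i _ => pE i)) exchange_big /=.
apply: (@le_trans _ _ (\sum_(q < mm) w q * topsum a #|J|)); last first.
  by rewrite -mulr_suml w1 mul1r.
apply: ler_sum => q _; rewrite -mulr_sumr; apply: ler_wpM2l => //.
have [s _ <-] := pS q.
rewrite -(big_imset (fun i => a i) (in2W (@perm_inj _ s))).
by rewrite -(card_imset J (@perm_inj _ s)); exact: sum_le_topsum.
Qed.

End Majorization.

Section Dilation.
Variable R : realType.
Local Notation mu := (@lebesgue_measure R).

Definition dilation_pushforward (b : R) : {measure set (measurableTypeR R) -> \bar R}.
Proof.
refine (pushforward mu ( *%R b : measurableTypeR R -> measurableTypeR R)).
exact: mulrl_measurable.
Defined.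

Lemma lebesgue_measure_dilate (b : R) (A : set R) : 0 < b -> measurable A ->
  (mu (( *%R b) @^-1` A) = (b^-1)%:E * mu A)%E.
Proof.
move=> b0 mA.
have on_itv : forall X : set R, ocitv X ->
    mu X = mscale (NngNum (ltW b0)) (dilation_pushforward b) X.
  move=> _ [[x1 x2] _ <-]; rewrite /mscale /= /pushforward /=.
  have -> : ( *%R b) @^-1` `]x1, x2]%classic = `]x1 / b, x2 / b]%classic.
    apply/seteqP; split => t /=; rewrite !in_itv /= => /andP[h1 h2].
      by rewrite ltr_pdivrMr // ler_pdivlMr // ![t * b]mulrC h1 h2.
    by rewrite [b * t]mulrC -ltr_pdivrMr // -ler_pdivlMr // h1 h2.
  rewrite !lebesgue_measure_itv /= !lte_fin ltr_pM2r ?invr_gt0 //.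
  case: ifP => _; last by rewrite mule0.
  by rewrite -!EFinD -EFinM; congr EFin; field; rewrite gt_eqF.
rewrite [in RHS](lebesgue_measure_unique on_itv mA) /mscale /=.
by rewrite muleA -EFinM mulVf ?mul1e ?gt_eqF.
Qed.

Import HBNNSimple.

Section DilateSimple.
Variables (h : {nnsfun (measurableTypeR R) >-> R}) (b : R).

Definition dilate : measurableTypeR R -> R := fun t => h (b * t).

Let dilate_measurable : measurable_fun [set: measurableTypeR R] dilate.
Proof. exact: (measurableT_comp (f := h) (g := *%R b)). Qed.
HB.instance Definition _ := isMeasurableFun.Build _ _ _ _ dilate dilate_measurable.

Let dilate_finite_range : finite_set (range dilate).
Proof.
by apply: sub_finite_set (@fimfunP _ _ h) => _ [t _ <-]; exists (b * t).
Qed.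
HB.instance Definition _ := @FiniteImage.Build _ R dilate dilate_finite_range.

Let dilate_ge0 t : 0 <= dilate t.
Proof. exact: fun_ge0. Qed.
HB.instance Definition _ := @isNonNegFun.Build _ R dilate dilate_ge0.

End DilateSimple.

Lemma sintegral_dilate (h : {nnsfun (measurableTypeR R) >-> R}) (b : R) : 0 < b ->
  sintegral mu (dilate h b) = ((b^-1)%:E * sintegral mu h)%E.
Proof.
move=> b0; rewrite !sintegralET ge0_mule_fsumr; last by move=> x; exact: nnsfun_mulemu_ge0.
apply: eq_fsbigr => x _.
rewrite (_ : dilate h b @^-1` [set x] = ( *%R b) @^-1` (h @^-1` [set x])) //.
rewrite lebesgue_measure_dilate // 1?muleCA //.
exact: (@measurable_funPTI _ _ _ _ h [set x] (measurable_set1 x)).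
Qed.

(* No measurability of [f] is needed: both sides are suprema over the
   simple functions below the integrand, and dilation maps one family onto
   the other. *)
Lemma ge0_integral_dilate_le (f : R -> \bar R) (c q : R) : 0 < c -> 0 < q ->
  (forall t, (0 <= f t)%E) ->
  ((c * q)%:E * \int[mu]_(t in [set: R]) f t <=
   \int[mu]_(t in [set: R]) (c%:E * f (t / q)%R))%E.
Proof.
move=> c0 q0 f0; have cq0 : 0 < c * q by rewrite mulr_gt0.
have g0 t : (0 <= c%:E * f (t / q)%R)%E by rewrite mule_ge0 ?lee_fin ?(ltW c0).
rewrite -lee_pdivlMl // !ge0_integralTE //.
apply: ge_ereal_sup => _ [h /= hle <-].
pose h1 := @scale_nnsfun _ _ _ (dilate h q^-1) c (ltW c0).
have -> : sintegral mu h = (((c * q)^-1)%:E * sintegral mu h1)%E.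
  rewrite (_ : sintegral mu h1 = sintegral mu (cst c \* dilate h q^-1)%R) //.
  rewrite sintegralrM sintegral_dilate ?invr_gt0 // !muleA -!EFinM invrK.
  by rewrite (_ : _ * c * q = 1) ?mul1e //; field; rewrite ?gt_eqF.
apply: lee_wpmul2l; first by rewrite lee_fin invr_ge0 ltW.
apply: ereal_sup_ubound; exists h1 => // t /=.
by rewrite EFinM /dilate [t / q]mulrC lee_wpmul2l ?lee_fin ?(ltW c0).
Qed.

Lemma ge0_integral_dilate (f : R -> \bar R) (c q : R) : 0 < c -> 0 < q ->
  (forall t, (0 <= f t)%E) ->
  (\int[mu]_(t in [set: R]) (c%:E * f (t / q)%R) =
   (c * q)%:E * \int[mu]_(t in [set: R]) f t)%E.
Proof.
move=> c0 q0 f0; apply/le_anti; rewrite ge0_integral_dilate_le // andbT.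
have g0 t : (0 <= c%:E * f (t / q)%R)%E by rewrite mule_ge0 ?lee_fin ?(ltW c0).
rewrite -lee_pdivrMl ?mulr_gt0 // invfM.
have := @ge0_integral_dilate_le (fun t => c%:E * f (t / q)%R)%E c^-1 q^-1.
rewrite !invr_gt0 => /(_ c0 q0 g0).
under [X in (_ <= X)%E -> _]eq_integral => t _.
  rewrite muleA -EFinM mulVf ?gt_eqF // mul1e invrK mulfK ?gt_eqF //.
over.
by rewrite mulrC.
Qed.

End Dilation.

Section VolumeScaling.
Variable R : realType.

Lemma volume_ge0 n (A : set ('I_n -> R)) : (0 <= volume A)%E.
Proof.
elim: n A => [|n IH] A /=; first by case: ifP.
by apply: integral_ge0 => t _; exact: IH.
Qed.

Lemma cons_coord_eta n (x : 'I_n.+1 -> R) :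
  cons_coord (x ord0) (fun i => x (lift ord0 i)) = x.
Proof.
by apply/funext => i; rewrite /cons_coord; case: (unliftP ord0 i) => [i'|] ->.
Qed.

Lemma scale_set_cons_coord n (q t : R) (A : set ('I_n.+1 -> R)) : 0 < q ->
  (fun y => scale_set q A (cons_coord t y)) =
  scale_set q (fun y => A (cons_coord (t / q) y)).
Proof.
move=> q0; apply/funext => y; apply/propext; split.
  case=> x Ax xE; have x0E : q * x ord0 = t.
    by have := congr1 (fun g => g ord0) xE; rewrite /cons_coord unlift_none.
  exists (fun i => x (lift ord0 i)).
    by rewrite -x0E mulrC mulKf ?gt_eqF ?cons_coord_eta.
  apply/funext => i; have := congr1 (fun g => g (lift ord0 i)) xE.
  by rewrite /cons_coord liftK.
case=> z Az <-; exists (cons_coord (t / q) z) => //.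
apply/funext => i; rewrite /cons_coord; case: unlift => //.
by rewrite mulrC mulfVK ?gt_eqF.
Qed.

Lemma volume_scale n (q : R) (A : set ('I_n -> R)) : 0 < q ->
  volume (scale_set q A) = ((q ^+ n)%:E * volume A)%E.
Proof.
move=> q0; elim: n A => [|n IH] A /=.
  rewrite expr0 mul1e (_ : (scale_set q A !=set0) = (A !=set0)) //.
  by rewrite propeqE; split=> [[_ [x Ax _]]|[x Ax]]; [exists x | exists (fun i => q * x i), x].
under eq_integral => t _ do rewrite scale_set_cons_coord // IH.
rewrite (ge0_integral_dilate (f := fun s => volume (fun y => A (cons_coord s y)))).
- by rewrite exprSr.
- by rewrite exprn_gt0.
- by [].
- by move=> s; exact: volume_ge0.
Qed.

Lemma proj_out_scale n (j : 'I_n.+1) (q : R) (A : set ('I_n.+1 -> R)) :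
  proj_out j (scale_set q A) = scale_set q (proj_out j A).
Proof.
apply/seteqP; split=> _ [_ [x Ax <-] <-].
  by exists (drop_coord j x) => //; exists x.
by exists (fun i => q * x i) => //; exists x.
Qed.

(* Unlike [muleBr], no definedness condition: for [V = S = +oo] both sides
   are [-oo]. *)
Lemma ge0_muleBr_EFin (r k : R) (V S : \bar R) : 0 < r -> 0 < k ->
  (0 <= V)%E -> (0 <= S)%E ->
  (r%:E * (V - k%:E * S) = r%:E * V - (r * k)%:E * S)%E.
Proof.
move=> r0 k0; case: V => [v| |] //; case: S => [s| |] // _ _.
- by rewrite -!EFinM -EFinB; congr EFin; ring.
- by rewrite !gt0_muley ?lte_fin ?mulr_gt0 //= !addeNy gt0_muleNy.
- by rewrite gt0_muley ?lte_fin //= !addye.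
- by rewrite !gt0_muley ?lte_fin ?mulr_gt0 //= addeNy gt0_muleNy.
Qed.

Lemma delta_scale n (A : set ('I_n.+1 -> R)) (q k : R) : 0 < q -> 0 < k ->
  (delta (q * k)%R (scale_set q A) = ((q ^+ n.+1)%R)%:E * delta k A)%E.
Proof.
move=> q0 k0; rewrite /delta volume_scale //.
under eq_bigr => j _ do rewrite proj_out_scale volume_scale //.
rewrite -ge0_sume_distrr; last by move=> j _; exact: volume_ge0.
rewrite ge0_muleBr_EFin ?exprn_gt0 ?volume_ge0 ?sume_ge0 // => [|j _]; last exact: volume_ge0.
by rewrite muleA -EFinM exprS; congr (_ - _%:E * _)%E; ring.
Qed.

End VolumeScaling.

Theorem lemma13 (R : realType) (n : nat) (a : 'I_n.+1 -> R)
  (a_pos : 0 < a ord0)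
  (a_mono : forall i j : 'I_n.+1, (i <= j)%N -> a i <= a j) :
  [/\ (* (1) width *)
      (forall j : 'I_n.+1, width_along j (SIM a) = (a ord_max)%:E),
      (* (2) downwards closure of conv hull of coordinate permutations *)
      SIM a = down_closure (conv_hull [set (fun i => a (s i)) | s in [set: 'S_n.+1]]),
      (* (3) slices at x_j = alpha_r *)
      (forall j : 'I_n.+1,
         [set drop_coord j x | x in [set x | SIM a x /\ x j = a ord_max]]
         = SIM (fun i : 'I_n => a (widen_ord (leqnSn n) i))),
      (* (4) projections *)
      (forall j : 'I_n.+1,
         proj_out j (SIM a) = SIM (fun i : 'I_n => a (lift ord0 i))) &
      (* (5) scaling of delta *)
      (forall q k : R, 0 < q -> 0 < k ->
         (delta (q * k)%R (scale_set q (SIM a)) = ((q ^+ n.+1)%R)%:E * delta k (SIM a))%E)].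
Proof.
have a_ge0 i : 0 <= a i := le_trans (ltW a_pos) (a_mono ord0 i (leq0n _)).
split.
- exact: width_SIM.
- exact: SIM_perm_hull.
- exact: slice_SIM_max.
- exact: proj_out_SIM.
- by move=> q k; exact: delta_scale.
Qed.
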